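(* Let $k\geq 2$ and $n\geq k$ be integers. Then in $\mathcal{H}$, $$ z_1\,\tilde{\sqcup}\, \sum_{\substack{s_i\geq 1,\ s_1\geq 2\\ s_1+\cdots+s_{k-1}=n-1}}z_{s_1, \dots, s_{k-1}} = \sum_{\substack{t_i\geq 1,\ t_1=1,\ t_2\geq 2\\ t_1+\cdots+t_{k}=n}}z_{t_1,\dots, t_{k}}+ k \sum_{\substack{ t_i\geq 1,\ t_1\geq 2,\ t_k=1 \\ t_1+\cdots+t_{k}=n}} z_{t_1,\dots, t_{k}} + (k-1) \sum_{\substack{ t_i\geq 1,\ t_1, t_k\geq 2 \\ t_1+\cdots+t_{k}=n}} z_{t_1,\dots, t_{k}} $$ and $$ z_1\,\tilde{\sqcup} \sum_{\substack{ s_i\geq 1\\ s_1+\cdots+s_{k-1}=n-1}} z_{s_1, \dots, s_{k-1}}= k \sum_{\substack{ t_i\geq 1,\ t_k=1\\ t_1+\cdots+t_{k}=n}}z_{t_1,\dots, t_{k}} + (k-1) \sum_{\substack{ t_i\geq 1,\ t_k\geq 2 \\ t_1+\cdots+t_{k}=n }} z_{t_1,\dots, t_{k}}. $$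
   Context: Let $\mathcal{H}$ be the free $\mathbb{Z}$-module on words in letters $z_s$ ($s\geq1$), with $z_{s_1,\dots,s_k}:=z_{s_1}\cdots z_{s_k}$ and $1$ the empty word. Let $\mathbb{Z}\langle x_0,x_1\rangle$ be the free $\mathbb{Z}$-module on words in two letters $x_0,x_1$, with the shuffle product $\sqcup$ defined bilinearly and recursively by $1\sqcup u=u\sqcup 1=u$ and $(au)\sqcup(bv)=a(u\sqcup (bv))+b((au)\sqcup v)$ for letters $a,b\in\{x_0,x_1\}$ and words $u,v$. Let $\rho$ be the $\mathbb{Z}$-linear bijection from $\mathbb{Z}\oplus \mathbb{Z}\langle x_0,x_1\rangle x_1$ (span of $1$ and words ending in $x_1$) onto $\mathcal{H}$ given by $\rho(1)=1$ and $\rho(x_0^{s_1-1}x_1\cdots x_0^{s_k-1}x_1)=z_{s_1,\dots,s_k}$. Define the product $\tilde{\sqcup}$ on $\mathcal{H}$ by $w_1\,\tilde{\sqcup}\,w_2=\rho\big(\rho^{-1}(w_1)\sqcup\rho^{-1}(w_2)\big)$. Empty sums are zero. *)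

From mathcomp Require Import all_boot all_order all_algebra.
Set Implicit Arguments. Unset Strict Implicit. Unset Printing Implicit Defensive.
Import GRing.Theory.
Local Open Scope ring_scope.

(* Words in the letters x0 (= false) and x1 (= true). *)
Definition xword := seq bool.
(* Words z_{s_1,...,s_k} in H are sequences of positive naturals [:: s_1; ...; s_k]. *)
Definition zword := seq nat.
Definition is_zword (w : zword) : bool := all (fun s => 0 < s)%N w.

(* Elements of the free Z-modules: formal Z-linear combinations (finite lists of
   (coefficient, basis word)); two are equal iff all coefficients agree. *)
Definition Hel := seq (int * zword).
Definition Xel := seq (int * xword).

Definition coefH (A : Hel) (t : zword) : int :=
  \sum_(p <- A | p.2 == t) p.1.

Definition eqH (A B : Hel) : Prop := forall t, is_zword t -> coefH A t = coefH B t.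

Definition addH (A B : Hel) : Hel := A ++ B.
Definition scaleH (c : int) (A : Hel) : Hel := [seq (c * p.1, p.2) | p <- A].

Definition zsum (S : seq zword) : Hel := [seq (1, s) | s <- S].

(* shuffle product of two x-words, as the multiset (list) of resulting words *)
Fixpoint shuffle (u : xword) : xword -> seq xword :=
  match u with
  | [::] => fun v => [:: v]
  | a :: u' =>
      fix shv (v : xword) : seq xword :=
        match v with
        | [::] => [:: u]
        | b :: v' => map (cons a) (shuffle u' v) ++ map (cons b) (shv v')
        end
  end.

(* rho^{-1} : z_{s1..sk} |-> x0^{s1-1} x1 ... x0^{sk-1} x1 *)
Definition rho_inv (s : zword) : xword :=
  flatten [seq rcons (nseq s_i.-1 false) true | s_i <- s].

(* rho on words ending in x1 (the empty word goes to the empty word);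
   trailing x0's (never occurring below) are dropped. *)
Fixpoint rho_aux (c : nat) (w : xword) : zword :=
  match w with
  | [::] => [::]
  | false :: w' => rho_aux c.+1 w'
  | true :: w' => c.+1 :: rho_aux 0 w'
  end.
Definition rho (w : xword) : zword := rho_aux 0 w.

Definition shX (A B : Xel) : Xel :=
  flatten [seq flatten [seq [seq (a.1 * b.1, w) | w <- shuffle a.2 b.2] | b <- B] | a <- A].

Definition rhoinvH (A : Hel) : Xel := [seq (p.1, rho_inv p.2) | p <- A].
Definition rhoX (A : Xel) : Hel := [seq (p.1, rho p.2) | p <- A].

Definition tsh (A B : Hel) : Hel := rhoX (shX (rhoinvH A) (rhoinvH B)).

Fixpoint comps (k n : nat) : seq zword :=
  match k with
  | 0 => if n == 0%N then [:: [::]] else [::]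
  | k'.+1 => flatten [seq [seq s :: c | c <- comps k' (n - s)] | s <- iota 1 n]
  end.

(* Shuffling the letter x1 into rho^-1(z_s) = x0^(s_1-1) x1 ... x0^(s_k-1) x1 inserts it at one of
   its positions; read back through rho, this replaces some s_i by a pair (p, s_i + 1 - p) with
   1 <= p <= s_i, or appends a final entry 1. Inverting, the coefficient of z_t in
   z_1 ~sh (sum_(s in S) z_s) is the number of deletions of t lying in S: the k - 1 merges of
   neighbours t_i, t_(i+1) into t_i + t_(i+1) - 1, plus the removal of t_k when t_k = 1. Every
   deletion keeps the leading entry t_1 except the first merge, which gives t_1 + t_2 - 1; counting
   the deletions whose leading entry is >= 2, respectively all deletions, yields the identities. *)
From mathcomp Require Import all_boot all_order all_algebra zify.

Set Implicit Arguments.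
Unset Strict Implicit.
Unset Printing Implicit Defensive.

Local Open Scope nat_scope.

Lemma mem_comps k n t :
  (t \in comps k n) = [&& size t == k, is_zword t & sumn t == n].
Proof.
elim: k n t => [|k IH] n t /=; first by case: t => [|x t]; case: n.
apply/flattenP/idP => [[_ /mapP [s hs ->] /mapP [c hc ->]] | ].
  rewrite IH in hc; case/and3P: hc => /eqP hsize hc /eqP hsum.
  rewrite mem_iota in hs; rewrite /= hsize eqxx hc /=; apply/andP; split; [lia | apply/eqP; lia].
case: t => [|x t] //= /and3P [/eqP ht /andP [hx hpos] /eqP hsum].
exists [seq x :: c | c <- comps k (n - x)].
  by apply/mapP; exists x; rewrite // mem_iota; lia.
by apply/mapP; exists t; rewrite // IH -eqSS ht eqxx hpos /=; apply/eqP; lia.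
Qed.

Lemma uniq_comps k n : uniq (comps k n).
Proof.
elim: k n => [|k IH] n /=; first by case: n.
elim: (iota 1 n) (iota_uniq 1 n) => [|s l IHl] //= /andP [hs hl].
rewrite cat_uniq IHl // map_inj_uniq ?IH; last by move=> a b [].
rewrite andbT; apply/hasPn => _ /flattenP [_ /mapP [s' hs' ->] /mapP [c _ ->]].
by apply/mapP => -[c' _ [e _]]; move: hs; rewrite -e hs'.
Qed.

Lemma rho_aux_nseq c m w : rho_aux c (nseq m false ++ w) = rho_aux (c + m) w.
Proof. by elim: m c => [|m IH] c /=; rewrite ?addn0 // IH addnS. Qed.

Lemma rho_inv_cons x s : rho_inv (x :: s) = nseq x.-1 false ++ true :: rho_inv s.
Proof. by rewrite /rho_inv /= cat_rcons. Qed.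

Lemma rho_invK s : is_zword s -> rho (rho_inv s) = s.
Proof.
elim: s => [|x s IH] //= /andP [hx hs].
by rewrite rho_inv_cons /rho rho_aux_nseq /= add0n prednK // -/(rho _) IH.
Qed.

Fixpoint insertions1 (s : zword) : seq zword :=
  match s with
  | [::] => [:: [:: 1]]
  | x :: s' => [seq p.+1 :: (x.-1 - p).+1 :: s' | p <- iota 0 x.-1]
               ++ (x :: 1 :: s') :: map (cons x) (insertions1 s')
  end.

Lemma shuffle1_cons b v :
  shuffle [:: true] (b :: v) = (true :: b :: v) :: map (cons b) (shuffle [:: true] v).
Proof. by []. Qed.

Lemma rho_aux_shuffle1_nseq c m w :
  map (rho_aux c) (shuffle [:: true] (nseq m false ++ w)) =
  [seq (c + p).+1 :: rho_aux (m - p) w | p <- iota 0 m]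
  ++ map (rho_aux (c + m)) (shuffle [:: true] w).
Proof.
elim: m c => [|m IH] c; first by rewrite /= addn0.
rewrite [nseq _ _ ++ w]/= shuffle1_cons map_cons -map_comp.
rewrite (@eq_map _ _ (rho_aux c \o cons false) (rho_aux c.+1)) // IH addSnnS.
rewrite [iota 0 m.+1]/= map_cons addn0 subn0 -(addn0 1) iotaDl -map_comp.
congr (_ :: _ ++ _); first by rewrite [rho_aux c _]/= rho_aux_nseq add1n.
by apply: eq_map => p /=; rewrite add1n subSS addSnnS.
Qed.

Lemma rho_shuffle1 s :
  is_zword s -> map rho (shuffle [:: true] (rho_inv s)) = insertions1 s.
Proof.
elim: s => [|x s IH] //= /andP [hx hs].
rewrite rho_inv_cons {1}/rho rho_aux_shuffle1_nseq shuffle1_cons map_cons -map_comp.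
rewrite add0n -IH // -map_comp.
congr (_ ++ _ :: _).
- by apply: eq_map => p /=; rewrite -/(rho _) rho_invK.
- by rewrite /= prednK // -/(rho _) rho_invK.
- by apply: eq_map => y /=; rewrite prednK.
Qed.

Fixpoint deletions1 (t : zword) : seq zword :=
  match t with
  | [::] => [::]
  | [:: a] => if a == 1 then [:: [::]] else [::]
  | a :: ((b :: r) as t') => ((a + b).-1 :: r) :: map (cons a) (deletions1 t')
  end.
Arguments deletions1 : simpl nomatch.

Lemma deletions1_single a : deletions1 [:: a] = if a == 1 then [:: [::]] else [::].
Proof. by []. Qed.

Lemma size_deletions1 t : size (deletions1 t) = (size t).-1 + (last 0 t == 1).
Proof.
case: t => [|a r] //=; elim: r a => [|b r IH] a /=.
  by rewrite deletions1_single; case: (a == 1).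
by rewrite size_map IH addSn.
Qed.

Lemma deletions1_shape t u : is_zword t -> u \in deletions1 t ->
  [/\ size u = (size t).-1, sumn u = (sumn t).-1, is_zword u & 0 < size t].
Proof.
elim: t u => [|a t IH] u //; case: t IH => [|b r] IH.
  by move=> _; rewrite deletions1_single; case: eqP => // ->; rewrite inE => /eqP ->.
move=> /= /and3P [ha hb hr]; rewrite inE => /orP [/eqP -> | /mapP [u' hu' ->]].
  by rewrite /= hr andbT; split => //; lia.
have [hsize hsum hpos _] := IH u' (ltac:(by rewrite /= hb hr)) hu'.
by rewrite /= hsize hsum ha hpos; split => //=; lia.
Qed.

Lemma count_pred1_map_cons (T : eqType) (a x : T) (y : seq T) (L : seq (seq T)) :
  count (pred1 (x :: y)) (map (cons a) L) = (a == x) * count (pred1 y) L.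
Proof.
elim: L => [|u L IH] /=; first by rewrite muln0.
by rewrite IH eqseq_cons; case: (a == x); rewrite ?mul1n ?mul0n.
Qed.

Lemma count_nil_map_cons (T : eqType) (a : T) (L : seq (seq T)) :
  count (pred1 [::]) (map (cons a) L) = 0.
Proof. by elim: L. Qed.

Lemma count_pred1_splits a b m (r s : zword) : 0 < a ->
  count (pred1 [:: a, b & r]) [seq p.+1 :: (m - p).+1 :: s | p <- iota 0 m]
  = [&& a <= m, a + b == m.+2 & s == r].
Proof.
move=> ha; rewrite count_map.
rewrite (eq_in_count (a2 := fun p => (p == a.-1) && [&& a <= m, a + b == m.+2 & s == r])).
  case C: [&& _, _ & _]; last first.
    by rewrite (eq_count (a2 := pred0)) ?count_pred0 // => p; rewrite andbF.
  move/and3P: C => [ham _ _].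
  rewrite (eq_count (a2 := pred1 a.-1)) => [|p]; last by rewrite /= andbT.
  by rewrite count_uniq_mem ?iota_uniq // mem_iota; lia.
move=> p; rewrite mem_iota /= !eqseq_cons => hp.
by case: (s == r); rewrite ?andbF ?andbT //; apply/idP/idP => H; lia.
Qed.

Lemma count_insertions1 s t :
  is_zword t -> count (pred1 t) (insertions1 s) = count (pred1 s) (deletions1 t).
Proof.
elim: s t => [|x s IH] [|a [|b r]] //.
- by rewrite deletions1_single /= eqseq_cons andbT eq_sym; case: (a == 1).
- by rewrite /= count_nil_map_cons eqseq_cons /= andbF.
- by rewrite /= count_cat /= count_nil_map_cons addn0; elim: (iota 0 x.-1) => //= p l ->.
- move=> _; rewrite /= count_cat /= count_pred1_map_cons (IH [::]) // muln0 eqseq_cons andbF.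
  rewrite (_ : count_mem (x :: s) (deletions1 [:: a]) = 0); last first.
    by rewrite deletions1_single; case: (a == 1).
  rewrite /= !addn0 count_map (eq_count (a2 := pred0)) ?count_pred0 // => p.
  by rewrite /= eqseq_cons /= andbF.
move=> ht; have /and3P [ha hb _] := ht.
rewrite [insertions1 _]/= count_cat /= !count_pred1_map_cons -IH;
  last by case/andP: ht.
rewrite count_pred1_splits // addnA (eq_sym a x); congr (_ + _).
rewrite !eqseq_cons (eq_sym r s); case: (s == r); rewrite ?andbF ?andbT //.
by case: leqP; case: eqP; case: eqP; case: eqP => /=; lia.
Qed.

Lemma sumn_count_pred1 (T : eqType) (S L : seq T) :
  uniq S -> sumn [seq count (pred1 s) L | s <- S] = count (mem S) L.
Proof.
elim: S => [|s S IH] /=; first by rewrite count_pred0.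
case/andP => hs hS; rewrite IH // -(count_predUI (pred1 s) (mem S)).
rewrite (eq_count (a1 := predI _ _) (a2 := pred0)) ?count_pred0 ?addn0.
  by apply: eq_count => u; rewrite /= inE.
by move=> u /=; apply/negbTE/andP => -[/eqP -> h]; rewrite h in hs.
Qed.

Local Open Scope ring_scope.
Import GRing.Theory.

Lemma coefH_zsum (L : seq zword) t : coefH (zsum L) t = (count (pred1 t) L)%:Z.
Proof.
elim: L => [|s L IH]; first by rewrite /coefH big_nil.
rewrite /coefH /zsum map_cons big_cons -/(zsum L) -/(coefH _ _) IH /=.
by case: (s == t); rewrite ?add0r // PoszD.
Qed.

Lemma coefH_add A B t : coefH (addH A B) t = coefH A t + coefH B t.
Proof. by rewrite /coefH /addH big_cat. Qed.

Lemma coefH_scale c A t : coefH (scaleH c A) t = c * coefH A t.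
Proof.
elim: A => [|p A IH]; first by rewrite /coefH !big_nil mulr0.
rewrite /coefH /scaleH map_cons !big_cons -/(scaleH c A) -!/(coefH _ _) IH /=.
by case: (p.2 == t); rewrite ?mulrDr.
Qed.

Lemma shX1_cons a b B :
  shX [:: a] (b :: B) = [seq (a.1 * b.1, w) | w <- shuffle a.2 b.2] ++ shX [:: a] B.
Proof. by rewrite /shX /= !cats0. Qed.

Lemma tsh_z1_zsum (S : seq zword) :
  tsh (zsum [:: [:: 1%N]]) (zsum S) =
  zsum (flatten [seq map rho (shuffle [:: true] (rho_inv s)) | s <- S]).
Proof.
rewrite /tsh (_ : rhoinvH _ = [:: (1, [:: true])]) //; elim: S => [|s S IH] //.
have rhoX_cat A B : rhoX (A ++ B) = rhoX A ++ rhoX B by exact: map_cat.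
rewrite [rhoinvH _]/= shX1_cons rhoX_cat IH map_cons.
rewrite -[flatten (_ :: _)]/(_ ++ _) /zsum map_cat.
by congr (_ ++ _); rewrite /rhoX -!map_comp; apply: eq_map => w /=; rewrite mulr1.
Qed.

Lemma coefH_tsh_z1 (S : seq zword) t : uniq S -> all is_zword S -> is_zword t ->
  coefH (tsh (zsum [:: [:: 1%N]]) (zsum S)) t = (count (mem S) (deletions1 t))%:Z.
Proof.
move=> hu hS ht; rewrite tsh_z1_zsum coefH_zsum count_flatten -map_comp.
rewrite -sumn_count_pred1 //; congr (Posz (sumn _)); apply/eq_in_map => s hs /=.
by rewrite rho_shuffle1 ?count_insertions1 // (allP hS).
Qed.

Lemma coefH_tsh_z1_comps (P : pred zword) k n t :
  (0 < k)%N -> (0 < n)%N -> is_zword t ->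
  coefH (tsh (zsum [:: [:: 1%N]]) (zsum [seq s <- comps k.-1 n.-1 | P s])) t
  = ((t \in comps k n) * count P (deletions1 t))%:Z.
Proof.
move=> hk hn ht; rewrite coefH_tsh_z1 ?filter_uniq ?uniq_comps //; last first.
  by apply/allP => u; rewrite mem_filter mem_comps => /and4P [].
have deletion_in_comps u : u \in deletions1 t -> (u \in comps k.-1 n.-1) = (t \in comps k n).
  move=> hu; have [size_u sum_u zword_u size_t] := deletions1_shape ht hu.
  have sum_t : (0 < sumn t)%N.
    by case: t ht size_t {hu size_u sum_u} => [|a r] //= /andP [ha _]; lia.
  rewrite !mem_comps size_u sum_u zword_u ht /=.
  by apply/andP/andP => -[/eqP e1 /eqP e2]; split; apply/eqP; lia.
case: (t \in comps k n) deletion_in_comps => hdel; rewrite ?mul1n ?mul0n; congr Posz.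
  by apply: eq_in_count => u hu; rewrite /= mem_filter hdel // andbT.
by rewrite (eq_in_count (a2 := pred0)) ?count_pred0 // => u hu;
  rewrite /= mem_filter hdel ?andbF.
Qed.

Lemma count_filter_comps (P : pred zword) k n t :
  count (pred1 t) [seq u <- comps k n | P u] = P t && (t \in comps k n).
Proof. by rewrite count_uniq_mem ?filter_uniq ?uniq_comps // mem_filter. Qed.

Local Open Scope nat_scope.

Lemma last_gt0 t : is_zword t -> 0 < size t -> 0 < last 0 t.
Proof. by case: t => [|a r] // ht _; apply: (allP ht); apply: mem_last. Qed.

Lemma count_deletions1_head_ge2 t : is_zword t -> 1 < size t ->
  count (fun u => 2 <= head 0 u) (deletions1 t) =
  (head 0 t == 1) && (2 <= nth 0 t 1)
  + size t * ((2 <= head 0 t) && (last 0 t == 1))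
  + (size t).-1 * ((2 <= head 0 t) && (2 <= last 0 t)).
Proof.
case: t => [|a [|b r]] // ht _; have := last_gt0 ht isT.
case/and3P: ht => ha hb _ /= hl; rewrite count_map.
have [->|h2a] : a = 1 \/ 1 < a by lia.
  by rewrite (eq_count (a2 := pred0)) // count_pred0 /=; lia.
rewrite (eq_count (a2 := predT)) => [|u]; last by rewrite /= h2a.
rewrite count_predT size_deletions1 /= h2a (_ : a == 1 = false); last by apply/eqP; lia.
by case: ltngtP hl => //= hl1 _; lia.
Qed.

Lemma size_deletions1_last t : is_zword t -> 0 < size t ->
  size (deletions1 t) = size t * (last 0 t == 1) + (size t).-1 * (2 <= last 0 t).
Proof.
move=> ht hsize; have := last_gt0 ht hsize; rewrite size_deletions1.
by case: (ltngtP (last 0 t) 1) => hl1 //= _; lia.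
Qed.

Local Open Scope ring_scope.

Theorem lemma4p2 (k n : nat) (hk : (2 <= k)%N) (hn : (k <= n)%N) :
  eqH (tsh (zsum [:: [:: 1%N]])
           (zsum [seq s <- comps k.-1 n.-1 | (2 <= head 0%N s)%N]))
      (addH (zsum [seq t <- comps k n | (head 0%N t == 1%N) && (2 <= nth 0%N t 1)%N])
      (addH (scaleH k%:Z
               (zsum [seq t <- comps k n | (2 <= head 0%N t)%N && (last 0%N t == 1%N)]))
            (scaleH (k.-1)%:Z
               (zsum [seq t <- comps k n | (2 <= head 0%N t)%N && (2 <= last 0%N t)%N]))))
  /\
  eqH (tsh (zsum [:: [:: 1%N]]) (zsum (comps k.-1 n.-1)))
      (addH (scaleH k%:Z (zsum [seq t <- comps k n | last 0%N t == 1%N]))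
            (scaleH (k.-1)%:Z (zsum [seq t <- comps k n | (2 <= last 0%N t)%N]))).
Proof.
have hk0 : (0 < k)%N by lia.
have hn0 : (0 < n)%N by lia.
split => t ht.
  rewrite coefH_tsh_z1_comps // !coefH_add !coefH_scale !coefH_zsum !count_filter_comps.
  rewrite -!PoszM -!PoszD; congr Posz.
  case: (boolP (t \in comps k n)) => [|_]; rewrite ?andbF ?muln0 //.
  rewrite mem_comps => /and3P [/eqP hsize _ _]; rewrite !andbT mul1n.
  by rewrite count_deletions1_head_ge2 ?hsize // addnA.
have := coefH_tsh_z1_comps predT hk0 hn0 ht; rewrite filter_predT => ->.
rewrite !coefH_add !coefH_scale !coefH_zsum !count_filter_comps -!PoszM -!PoszD; congr Posz.
case: (boolP (t \in comps k n)) => [|_]; rewrite ?andbF ?muln0 //.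
rewrite mem_comps => /and3P [/eqP hsize _ _]; rewrite !andbT mul1n count_predT.
by rewrite size_deletions1_last ?hsize.
Qed.
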